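(* Let $(V,\langle\cdot\,,\cdot\rangle_V)$ be an admissible module and $\Omega_1,\ldots,\Omega_l$ symmetric linear operators on $V$ (i.e. $\langle\Omega_kv,w\rangle_V=\langle v,\Omega_kw\rangle_V$ for all $v,w$) such that $\Omega_k^2=-\mathrm{Id}_V$ for $k=1,\ldots,l$ and $\Omega_k\Omega_j=-\Omega_j\Omega_k$ for all $k\neq j$. Then for any $w\in V$ with $\langle w,w\rangle_V=1$ there is a vector $\tilde w\in V$ satisfying $\langle\tilde w,\Omega_k\tilde w\rangle_V=0$ for all $k=1,\ldots,l$ and $\langle\tilde w,\tilde w\rangle_V=1$.
   Context: A scalar product is a real symmetric non-degenerate bilinear form. An admissible module is a real vector space $V$ which is a module over a Clifford algebra $\mathrm{Cl}_{r,s}$ (generated by $\mathbb R^{r,s}$ with $z^2=-\langle z,z\rangle\cdot1$), with representation $z\mapsto J_z$, together with a scalar product $\langle\cdot\,,\cdot\rangle_V$ satisfying $\langle J_zu,v\rangle_V=-\langle u,J_zv\rangle_V$ for all $z\in\mathbb R^{r,s}$, $u,v\in V$. *)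

(* V = 'rV[R]_n (finite-dimensional real vector space);
   linear operators are matrices acting on the right: A applied to u is u *m A. *)
From HB Require Import structures.
From mathcomp Require Import all_boot all_order all_algebra.
From mathcomp Require Import reals.
Set Implicit Arguments. Unset Strict Implicit. Unset Printing Implicit Defensive.
Import Order.TTheory GRing.Theory Num.Theory.
Local Open Scope ring_scope.

Definition sprod (R : pzRingType) (n : nat) (G : 'M[R]_n) (u v : 'rV[R]_n) : R :=
  (u *m G *m v^T) 0 0.

Definition scalar_product (R : realType) (n : nat) (G : 'M[R]_n) : Prop :=
  G^T = G /\ G \in unitmx.

Definition sig_sign (R : realType) (r s : nat) (i : 'I_(r + s)) : R :=
  if (i < r)%N then 1 else -1.

Definition rs_prod (R : realType) (r s : nat) (z z' : 'rV[R]_(r + s)) : R :=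
  \sum_(i < r + s) @sig_sign R r s i * z 0 i * z' 0 i.

Definition Jz (R : realType) (r s n : nat) (J : 'I_(r + s) -> 'M[R]_n)
  (z : 'rV[R]_(r + s)) : 'M[R]_n :=
  \sum_(i < r + s) z 0 i *: J i.

(* admissible module: Cl_{r,s}-module (J_z^2 = - <z,z> Id) with a scalar product
   G such that each J_z is skew-symmetric *)
Definition admissible (R : realType) (r s n : nat) (G : 'M[R]_n)
  (J : 'I_(r + s) -> 'M[R]_n) : Prop :=
  [/\ scalar_product G,
      (forall z : 'rV[R]_(r + s),
          @Jz R r s n J z *m @Jz R r s n J z = - (@rs_prod R r s z z) *: (1%:M : 'M[R]_n)) &
      (forall (z : 'rV[R]_(r + s)) (u v : 'rV[R]_n),
          sprod G (u *m @Jz R r s n J z) v = - sprod G u (v *m @Jz R r s n J z))].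

(* For O symmetric with O^2 = -1, replacing u by a u + b u O multiplies
   p + i x, where p = <u,u> and x = <u, u O>, by (a - i b)^2.  Taking a - i b
   along a square root of p - i x makes the product real and positive, so the
   new vector satisfies <u, u O> = 0 with <u,u> still positive; and when O
   anticommutes with O', the move preserves <u, u O'> = 0.  Treating the
   Omega_k one at a time and normalising gives the vector. *)
From mathcomp Require Import all_boot all_order all_algebra.
From mathcomp Require Import reals.
From mathcomp Require Import ring.
Set Implicit Arguments. Unset Strict Implicit. Unset Printing Implicit Defensive.
Import Order.TTheory GRing.Theory Num.Theory.
Local Open Scope ring_scope.

Section BilinearForm.
Variables (R : realType) (n : nat) (G : 'M[R]_n).
Implicit Types u v w : 'rV[R]_n.

Lemma sprodDl u u' v : sprod G (u + u') v = sprod G u v + sprod G u' v.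
Proof. by rewrite /sprod !mulmxDl mxE. Qed.

Lemma sprodZl (a : R) u v : sprod G (a *: u) v = a * sprod G u v.
Proof. by rewrite /sprod -!scalemxAl mxE. Qed.

Lemma sprodDr u v v' : sprod G u (v + v') = sprod G u v + sprod G u v'.
Proof. by rewrite /sprod linearD /= mulmxDr mxE. Qed.

Lemma sprodZr (a : R) u v : sprod G u (a *: v) = a * sprod G u v.
Proof. by rewrite /sprod linearZ /= -scalemxAr mxE. Qed.

Lemma sprodNr u v : sprod G u (- v) = - sprod G u v.
Proof. by rewrite /sprod linearN /= mulmxN mxE. Qed.

Definition sprod_symmetric_op (O : 'M[R]_n) :=
  forall u v, sprod G (u *m O) v = sprod G u (v *m O).

Section ComplexStructure.
Variables (O : 'M[R]_n).
Hypotheses (O_sym : sprod_symmetric_op O) (O_sqr : O *m O = - (1%:M : 'M[R]_n)).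

Lemma mulmx_sqrN1 u : u *m O *m O = - u.
Proof. by rewrite -mulmxA O_sqr mulmxN mulmx1. Qed.

Lemma sprod_combination u (a b : R) :
  let p := sprod G u u in let x := sprod G u (u *m O) in
  let w := a *: u + b *: (u *m O) in
  sprod G w w = (a ^+ 2 - b ^+ 2) * p + 2 * a * b * x /\
  sprod G w (w *m O) = (a ^+ 2 - b ^+ 2) * x - 2 * a * b * p.
Proof.
move=> p x w.
have Ou_u : sprod G (u *m O) u = x by rewrite O_sym.
have Ou_Ou : sprod G (u *m O) (u *m O) = - p by rewrite O_sym mulmx_sqrN1 sprodNr.
have wO : w *m O = a *: (u *m O) - b *: u.
  by rewrite /w mulmxDl -!scalemxAl mulmx_sqrN1 scalerN.
rewrite wO /w !(sprodDl, sprodDr, sprodZl, sprodZr, sprodNr) Ou_u Ou_Ou -/p -/x.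
by split; ring.
Qed.

Definition isotropize u : 'rV[R]_n :=
  let p := sprod G u u in let x := sprod G u (u *m O) in
  (p + Num.sqrt (p ^+ 2 + x ^+ 2)) *: u + x *: (u *m O).

Lemma sprod_isotropize_Om u : sprod G (isotropize u) (isotropize u *m O) = 0.
Proof.
have [_ ->] := sprod_combination u
  (sprod G u u + Num.sqrt (sprod G u u ^+ 2 + sprod G u (u *m O) ^+ 2))
  (sprod G u (u *m O)).
set p := sprod G u u; set x := sprod G u (u *m O).
have m2 : Num.sqrt (p ^+ 2 + x ^+ 2) ^+ 2 = p ^+ 2 + x ^+ 2.
  by rewrite sqr_sqrtr // addr_ge0 // sqr_ge0.
by rewrite sqrrD m2; ring.
Qed.

Lemma sprod_isotropize_gt0 u :
  0 < sprod G u u -> 0 < sprod G (isotropize u) (isotropize u).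
Proof.
have [-> _] := sprod_combination u
  (sprod G u u + Num.sqrt (sprod G u u ^+ 2 + sprod G u (u *m O) ^+ 2))
  (sprod G u (u *m O)).
set p := sprod G u u; set x := sprod G u (u *m O); move=> p_gt0.
set m := Num.sqrt (p ^+ 2 + x ^+ 2).
have m2 : m ^+ 2 = p ^+ 2 + x ^+ 2 by rewrite sqr_sqrtr // addr_ge0 // sqr_ge0.
have -> : ((p + m) ^+ 2 - x ^+ 2) * p + 2 * (p + m) * x * x
          = 2 * (p + m) * (p ^+ 2 + x ^+ 2).
  by rewrite sqrrD m2; ring.
rewrite !mulr_gt0 ?ltr_wpDr ?sqrtr_ge0 ?sqr_ge0 ?exprn_gt0 //.
Qed.

Lemma sprod_combination_anticomm (Oj : 'M[R]_n) u (a b : R) :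
  O *m Oj = - (Oj *m O) -> sprod G u (u *m Oj) = 0 ->
  let w := a *: u + b *: (u *m O) in sprod G w (w *m Oj) = 0.
Proof.
move=> anti u_Oj w.
have anti' : Oj *m O = - (O *m Oj) by rewrite anti opprK.
have Ou_uOj : sprod G (u *m O) (u *m Oj) = - sprod G u (u *m O *m Oj).
  by rewrite O_sym -mulmxA anti' mulmxN sprodNr mulmxA.
have Ou_OuOj : sprod G (u *m O) (u *m O *m Oj) = 0.
  by rewrite O_sym -mulmxA anti' mulmxN mulmxA mulmx_sqrN1 mulNmx opprK.
rewrite /w mulmxDl -!scalemxAl.
by rewrite !(sprodDl, sprodDr, sprodZl, sprodZr) Ou_uOj Ou_OuOj u_Oj; ring.
Qed.

End ComplexStructure.

Section AnticommutingFamily.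
Variables (l : nat) (Om : 'I_l -> 'M[R]_n).
Hypotheses (Om_sym : forall k, sprod_symmetric_op (Om k))
  (Om_sqr : forall k, Om k *m Om k = - (1%:M : 'M[R]_n))
  (Om_anti : forall k j, k != j -> Om k *m Om j = - (Om j *m Om k)).

Lemma exists_isotropic_prefix w : 0 < sprod G w w ->
  forall m, (m <= l)%N -> exists v : 'rV[R]_n,
    0 < sprod G v v /\ forall k : 'I_l, (k < m)%N -> sprod G v (v *m Om k) = 0.
Proof.
move=> w_gt0; elim=> [_|m IH lt_ml]; first by exists w.
have [v [v_gt0 v_iso]] := IH (ltnW lt_ml).
pose k0 := Ordinal lt_ml.
exists (isotropize (Om k0) v); split; first exact: sprod_isotropize_gt0.
move=> k; rewrite ltnS leq_eqVlt => /orP[/eqP k_eq|lt_km].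
  by rewrite (_ : k = k0); [exact: sprod_isotropize_Om | exact: val_inj].
apply: sprod_combination_anticomm; rewrite ?v_iso //.
by apply: Om_anti; rewrite -val_eqE /= eq_sym neq_ltn lt_km.
Qed.

End AnticommutingFamily.

Lemma sprod_normalize u : 0 < sprod G u u ->
  sprod G ((Num.sqrt (sprod G u u))^-1 *: u) ((Num.sqrt (sprod G u u))^-1 *: u) = 1.
Proof.
move=> u_gt0; rewrite sprodZl sprodZr mulrA -expr2 exprVn sqr_sqrtr ?ltW //.
by rewrite mulVf // gt_eqF.
Qed.

End BilinearForm.

Theorem lemma2p9 (R : realType) (r s n l : nat) (G : 'M[R]_n)
  (J : 'I_(r + s) -> 'M[R]_n) (Om : 'I_l -> 'M[R]_n) :
  admissible G J ->
  (forall (k : 'I_l) (u v : 'rV[R]_n), sprod G (u *m Om k) v = sprod G u (v *m Om k)) ->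
  (forall k : 'I_l, Om k *m Om k = - (1%:M : 'M[R]_n)) ->
  (forall k j : 'I_l, k != j -> Om k *m Om j = - (Om j *m Om k)) ->
  forall w : 'rV[R]_n, sprod G w w = 1 ->
  exists wt : 'rV[R]_n,
    (forall k : 'I_l, sprod G wt (wt *m Om k) = 0) /\ sprod G wt wt = 1.
Proof.
move=> _ Om_sym Om_sqr Om_anti w w1.
have w_gt0 : 0 < sprod G w w by rewrite w1 ltr01.
have [v [v_gt0 v_iso]] := exists_isotropic_prefix Om_sym Om_sqr Om_anti w_gt0 (leqnn l).
exists ((Num.sqrt (sprod G v v))^-1 *: v); split; last exact: sprod_normalize.
by move=> k; rewrite -scalemxAl sprodZl sprodZr v_iso ?ltn_ord // !mulr0.
Qed.
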